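(* Let $$B= \begin{pmatrix} 1& 2& 2\\ 2&1& 2\\ 2&2& 3 \end{pmatrix}.$$ For every positive integer $n$, writing $B^n(3,4,5)^\top=(x,y,z)^\top$, the circumradius of the triangle with side lengths $x,y,z$ is $$R_n=\frac{(5\sqrt{2}-7)(3-2\sqrt{2})^n+(5\sqrt{2}+7)(3+2\sqrt{2})^n}{4\sqrt{2}}.$$
   Context: Triples are regarded as row vectors and $\top$ denotes transpose. The triple $B^n(3,4,5)^\top$ is a primitive Pythagorean triple (positive integers with $x^2+y^2=z^2$), so the triangle is a right triangle with hypotenuse $z$. *)

From HB Require Import structures.
From mathcomp Require Import all_boot all_order all_algebra.
From mathcomp Require Import reals.
Set Implicit Arguments. Unset Strict Implicit. Unset Printing Implicit Defensive.
Import Order.TTheory GRing.Theory Num.Theory.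
Local Open Scope ring_scope.

Definition Bmat : 'M[int]_3 :=
  \matrix_(i < 3, j < 3)
    nth 0 (nth [::] [:: [:: 1; 2; 2]; [:: 2; 1; 2]; [:: 2; 2; 3]] i) j.

Definition v345 : 'cV[int]_3 := \col_(i < 3) nth 0 [:: 3; 4; 5] i.

(* Circumradius of a triangle with side lengths a, b, c:
   R = abc / (4 * Area), with Area given by Heron's formula, i.e.
   R = abc / sqrt((a+b+c)(-a+b+c)(a-b+c)(a+b-c)). *)
Definition circumradius (R : rcfType) (a b c : R) : R :=
  a * b * c / Num.sqrt ((a + b + c) * (- a + b + c) * (a - b + c) * (a + b - c)).

From HB Require Import structures.
From mathcomp Require Import all_boot all_order all_algebra.
From mathcomp Require Import reals.
From mathcomp Require Import ring zify.
Import Order.TTheory GRing.Theory Num.Theory.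
Local Open Scope ring_scope.

(* B preserves positivity and the form x^2 + y^2 - z^2, so every B^n (3,4,5)
   is a Pythagorean triple and R_n is half its hypotenuse z_n.  The hypotenuses
   satisfy z_(n+2) = 6 z_(n+1) - z_n, whose characteristic roots are 3 -+ 2 sqrt 2;
   the numerator of the formula, divided by 2 sqrt 2, satisfies the same
   recurrence and agrees with z_n at n = 0, 1. *)

Definition Bstep (t : int * int * int) : int * int * int :=
  let: (x, y, z) := t in (x + 2 * y + 2 * z, 2 * x + y + 2 * z, 2 * x + 2 * y + 3 * z).

Definition col3 (t : int * int * int) : 'cV[int]_3 :=
  \col_(i < 3) nth 0 [:: t.1.1; t.1.2; t.2] i.

Lemma Bmat_col3 t : Bmat *m col3 t = col3 (Bstep t).
Proof.
case: t => [[x y] z]; apply/matrixP => i j.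
rewrite !mxE !big_ord_recl big_ord0 !mxE /=.
by case: i => [[|[|[|]]] //= _]; rewrite /bump /=; ring.
Qed.

Lemma Bmat_pow_v345 n : Bmat ^+ n *m v345 = col3 (iter n Bstep (3, 4, 5)).
Proof.
elim: n => [|n IHn].
  by rewrite expr0 mul1mx; apply/matrixP => i j; rewrite !mxE.
by rewrite exprS -mulmxA IHn Bmat_col3.
Qed.

Definition pythagorean_triple (t : int * int * int) :=
  [/\ 0 < t.1.1, 0 < t.1.2, 0 < t.2 & t.1.1 ^+ 2 + t.1.2 ^+ 2 = t.2 ^+ 2].

Lemma Bstep_pythagorean t : pythagorean_triple t -> pythagorean_triple (Bstep t).
Proof. by case: t => [[x y] z] [/= x_gt0 y_gt0 z_gt0 xyz]; split => /=; lia. Qed.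

Lemma iter_Bstep_pythagorean n : pythagorean_triple (iter n Bstep (3, 4, 5)).
Proof. by elim: n => [|n IHn] //=; apply: Bstep_pythagorean. Qed.

(* Only x + y and z enter the hypotenuse of the next triple, and B acts on
   that pair through [[3, 4], [2, 3]], whose characteristic polynomial is X^2 - 6X + 1. *)
Lemma Bstep2_hypotenuse t : (Bstep (Bstep t)).2 = 6 * (Bstep t).2 - t.2.
Proof. by case: t => [[x y] z] /=; ring. Qed.

Lemma circumradius_right (R : rcfType) (a b c : R) :
  0 < a -> 0 < b -> a ^+ 2 + b ^+ 2 = c ^+ 2 -> circumradius a b c = c / 2.
Proof.
move=> a_gt0 b_gt0 abc.
have heron : (a + b + c) * (- a + b + c) * (a - b + c) * (a + b - c) = (2 * a * b) ^+ 2.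
  have -> : (a + b + c) * (- a + b + c) * (a - b + c) * (a + b - c)
            = (2 * a * b) ^+ 2 - (c ^+ 2 - a ^+ 2 - b ^+ 2) ^+ 2 by ring.
  by rewrite -abc; ring.
rewrite /circumradius heron sqrtr_sqr ger0_norm; last by rewrite !mulr_ge0 ?ltW.
by field; rewrite !lt0r_neq0.
Qed.

Lemma eq_lin_rec2 (R : pzRingType) (p q : R) (u v : nat -> R) :
  (forall n, u n.+2 = p * u n.+1 - q * u n) ->
  (forall n, v n.+2 = p * v n.+1 - q * v n) ->
  u 0%N = v 0%N -> u 1%N = v 1%N -> u =1 v.
Proof.
move=> u_rec v_rec uv0 uv1 n.
suff: u n = v n /\ u n.+1 = v n.+1 by case.
by elim: n => [|n [IHn IHn1]] //; rewrite u_rec v_rec IHn IHn1.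
Qed.

Lemma lin_rec2_geometric (R : comPzRingType) (p q r1 r2 c1 c2 : R) :
  r1 ^+ 2 = p * r1 - q -> r2 ^+ 2 = p * r2 - q ->
  forall n, c1 * r1 ^+ n.+2 + c2 * r2 ^+ n.+2
            = p * (c1 * r1 ^+ n.+1 + c2 * r2 ^+ n.+1) - q * (c1 * r1 ^+ n + c2 * r2 ^+ n).
Proof.
move=> r1_root r2_root n.
rewrite -[n.+2]addn2 -[n.+1]addn1 !exprD r1_root r2_root; ring.
Qed.

Lemma hypotenuse_closed_form (R : rcfType) n :
  (5 * Num.sqrt 2 - 7) * (3 - 2 * Num.sqrt 2) ^+ n
    + (5 * Num.sqrt 2 + 7) * (3 + 2 * Num.sqrt 2) ^+ n
  = 2 * Num.sqrt 2 * ((iter n Bstep (3, 4, 5)).2)%:~R :> R.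
Proof.
set s : R := Num.sqrt 2.
have s2 : s ^+ 2 = 2 by rewrite sqr_sqrtr ?ler0n.
have root_minus : (3 - 2 * s) ^+ 2 = 6 * (3 - 2 * s) - 1.
  by rewrite sqrrB exprMn s2; ring.
have root_plus : (3 + 2 * s) ^+ 2 = 6 * (3 + 2 * s) - 1.
  by rewrite sqrrD exprMn s2; ring.
apply: (@eq_lin_rec2 _ 6 1 (fun m => _ * _ ^+ m + _ * _ ^+ m)
                    (fun m => 2 * s * ((iter m Bstep (3, 4, 5)).2)%:~R)) => /=.
- exact: lin_rec2_geometric.
- by move=> m; rewrite Bstep2_hypotenuse intrB intrM; ring.
- by ring.
- (* z_1 must be evaluated first: [ring] does not terminate on the integer expression. *)
  by rewrite !expr1 (_ : 2 * 3 + 2 * 4 + 3 * 5 = 29 :> int) //; ring.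
Qed.

Theorem mainTheorem8 (R : realType) (n : nat) (hn : (0 < n)%N) :
  let w := Bmat ^+ n *m v345 in
  let x : R := (w ord0 ord0)%:~R in
  let y : R := (w (inord 1) ord0)%:~R in
  let z : R := (w (inord 2) ord0)%:~R in
  circumradius x y z =
    ((5 * Num.sqrt 2 - 7) * (3 - 2 * Num.sqrt 2) ^+ n
     + (5 * Num.sqrt 2 + 7) * (3 + 2 * Num.sqrt 2) ^+ n) / (4 * Num.sqrt 2).
Proof.
rewrite /= Bmat_pow_v345 !mxE !inordK //=.
have [x_gt0 y_gt0 _ xyz] := iter_Bstep_pythagorean n.
rewrite circumradius_right ?ltr0z // ?hypotenuse_closed_form; last first.
  by rewrite -!rmorphXn -rmorphD /= xyz.
have s_neq0 : Num.sqrt (2 : R) != 0 by rewrite sqrtr_eq0 -ltNge ltr0n.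
by field; rewrite s_neq0.
Qed.
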